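(* Let $G$ be a finite simple graph with edge weight function $w$ and vertex weight function $w_1$, let $\theta$ be a real number and let $u\in V(G)$. If $u$ is $(\theta,w,w_1)$-special, then $u$ is $(\theta,w,w_1)$-positive.
   Context: An edge weight function $w$ assigns a nonzero complex number to each edge; a vertex weight function $w_1$ assigns a real number (possibly $0$) to each vertex; subgraphs carry restricted weights; $G\setminus u$ deletes $u$ and its incident edges. For $A\subseteq E(G)$, $w(A)=\prod_{e\in A}w(e)$. $\mu_w(G,x)=\sum_{M}(-1)^{|M|}|w(M)|^2x^{n-2|M|}$ over all matchings $M$ (including empty). $\eta_{(w,w_1)}(G,x)=\sum_{S\subseteq V(G)}(-1)^{|V(G)\setminus S|}\big(\prod_{y\in V(G)\setminus S}w_1(y)\big)\mu_w(G[S],x)$ with $G[S]$ the induced subgraph; $\mu_w,\eta_{(w,w_1)}$ of the empty graph equal $1$. $\mathrm{mult}(\theta,H)$ is the multiplicity of $\theta$ as a root of $\eta_{(w,w_1)}(H,x)$ ($0$ if not a root). A vertex $v$ of $H$ is $(\theta,w,w_1)$-essential if $\mathrm{mult}(\theta,H\setminus v)=\mathrm{mult}(\theta,H)-1$ and $(\theta,w,w_1)$-positive if $\mathrm{mult}(\theta,H\setminus v)=\mathrm{mult}(\theta,H)+1$; $v$ is $(\theta,w,w_1)$-special if it is not essential but is adjacent to some essential vertex. *)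

From HB Require Import structures.
From mathcomp Require Import all_boot all_order all_algebra.
From mathcomp Require Import complex.
Set Implicit Arguments. Unset Strict Implicit. Unset Printing Implicit Defensive.
Import Order.TTheory GRing.Theory Num.Theory.
Local Open Scope ring_scope.
Local Open Scope complex_scope.

(* Subgraphs are given by vertex subsets S : {set T} (induced
   subgraph G[S]); edges are two-element sets [set x; y] with adj x y.
   Edge weights: w : {set T} -> R[i] (only its values on edges matter);
   vertex weights: w1 : T -> R. *)

Section WeightedGraphPolys.
Variables (R : rcfType) (T : finType) (adj : rel T).
Variable (w : {set T} -> R[i]) (w1 : T -> R).

Definition simple_graph := symmetric adj /\ irreflexive adj.

Definition edge_weight_ok := forall x y, adj x y -> w [set x; y] != 0.

Definition is_edge_in (S : {set T}) (e : {set T}) : bool :=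
  [exists x, [exists y, [&& x \in S, y \in S, adj x y & e == [set x; y]]]].

Definition matching_in (S : {set T}) (M : {set {set T}}) : bool :=
  [forall e in M, is_edge_in S e] &&
  [forall e in M, forall f in M, (e != f) ==> [disjoint e & f]].

Definition wM (M : {set {set T}}) : R[i] := \prod_(e in M) w e.

Definition mu_w (S : {set T}) : {poly R[i]} :=
  \sum_(M : {set {set T}} | matching_in S M)
    ((-1) ^+ #|M| * `|wM M| ^+ 2) *: 'X^(#|S| - 2 * #|M|).

Definition eta_w (S : {set T}) : {poly R[i]} :=
  \sum_(S' : {set T} | S' \subset S)
    ((-1) ^+ #|S :\: S'| * \prod_(y in S :\: S') (w1 y)%:C) *: mu_w S'.

Definition mult (theta : R) (S : {set T}) : nat := mup (theta%:C) (eta_w S).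

Definition essential (theta : R) (S : {set T}) (v : T) : Prop :=
  v \in S /\ (mult theta (S :\ v)).+1 = mult theta S.

Definition positive (theta : R) (S : {set T}) (v : T) : Prop :=
  v \in S /\ mult theta (S :\ v) = (mult theta S).+1.

Definition special (theta : R) (S : {set T}) (v : T) : Prop :=
  v \in S /\ ~ essential theta S v /\
  exists2 u, u \in S /\ adj v u & essential theta S u.

End WeightedGraphPolys.

(* Restricted to the vertex set S, eta_w has real coefficients and satisfies the
   three-term recurrence
     p S = (x - w1 u) p (S - u) - sum_(z ~ u) |w uz|^2 p (S - u - z).
   Hence the Wronskian p (S - u) p' S - p' (S - u) p S and the Christoffel-Darboux form
   p (S - u) p (S - v) - p S p (S - u - v) are squares plus positive combinations of the
   same forms on smaller sets, so near theta each of them is either zero or has a root of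
   even order with a positive cofactor. Divisibility of the Wronskian then gives
   interlacing: deleting a vertex changes mult(theta) by at most one. If u were special
   but not positive, u would keep the multiplicity m of G while an essential neighbour v
   drops it to m - 1; the Christoffel-Darboux form of u and v would then vanish to the
   odd order 2m - 1 at theta. *)

From HB Require Import structures.
From mathcomp Require Import all_boot all_order all_algebra.
From mathcomp Require Import complex ring zify.
Set Implicit Arguments. Unset Strict Implicit. Unset Printing Implicit Defensive.
Import Order.TTheory GRing.Theory Num.Theory.
Local Open Scope ring_scope.
Local Open Scope complex_scope.

Lemma mup_map_poly (F K : fieldType) (f : {rmorphism F -> K}) x (q : {poly F}) :
  q != 0 -> mup (f x) (map_poly f q) = mup x q.
Proof.
move=> q0; have fq0 : map_poly f q != 0 by rewrite map_poly_eq0.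
apply/eqP; rewrite eqn_leq mup_leq // mup_geq // -map_polyXsubC -!rmorphXn !dvdp_map.
by rewrite -mup_leq // -mup_geq // leqnn.
Qed.

Section RootGerm.
Variables (R : realFieldType) (th : R).
Local Notation e := ('X - th%:P).

Definition germ_pos (q : {poly R}) (n : nat) :=
  exists2 s : {poly R}, q = e ^+ (2 * n) * s & 0 < s.[th].

Definition germ_nonneg (q : {poly R}) := q = 0 \/ exists n, germ_pos q n.

Lemma dvdp_mup (q : {poly R}) j : (j <= mup th q)%N -> e ^+ j %| q.
Proof.
have [->|q0] := eqVneq q 0; first by rewrite dvdp0.
by rewrite mup_geq.
Qed.

Lemma dvdp_deriv_mup (q : {poly R}) : e ^+ (mup th q).-1 %| q^`().
Proof.
have [->|q0] := eqVneq q 0; first by rewrite deriv0 dvdp0.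
have [m [r /implyP/(_ q0) rth ->]] := multiplicity_XsubC q th.
rewrite mupMr // mup_XsubCX eqxx derivM deriv_exp derivXsubC mul1r.
rewrite dvdp_add ?dvdp_mull ?dvdp_exp2l ?leq_pred //.
by rewrite -mulr_natl dvdp_mull.
Qed.

Lemma dvdp_wronskian_mup (f g : {poly R}) :
  e ^+ (mup th f + mup th g).-1 %| f * g^`() - f^`() * g.
Proof.
apply: dvdp_sub.
  apply: dvdp_trans (dvdp_mul (dvdp_mup (leqnn _)) (dvdp_deriv_mup g)).
  by rewrite -exprD dvdp_exp2l //; lia.
apply: dvdp_trans (dvdp_mul (dvdp_deriv_mup f) (dvdp_mup (leqnn _))).
by rewrite -exprD dvdp_exp2l //; lia.
Qed.

Lemma germ_pos_neq0 q n : germ_pos q n -> q != 0.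
Proof.
move=> [s -> s_gt0]; rewrite mulf_neq0 ?expf_neq0 ?polyXsubC_eq0 //.
by apply: contraTneq s_gt0 => ->; rewrite horner0 ltxx.
Qed.

Lemma germ_pos_mup q n : germ_pos q n -> mup th q = (2 * n)%N.
Proof.
move=> [s -> s_gt0]; rewrite mupMl ?mup_XsubCX ?eqxx //.
by rewrite /root gt_eqF.
Qed.

Lemma germ_posD q1 q2 n1 n2 : germ_pos q1 n1 -> germ_pos q2 n2 ->
  germ_pos (q1 + q2) (minn n1 n2).
Proof.
wlog le12 : q1 q2 n1 n2 / (n1 <= n2)%N.
  move=> gen g1 g2; case/orP: (leq_total n1 n2) => [le12|le21]; first exact: gen.
  by rewrite addrC minnC; apply: gen.
move=> [s1 -> s1_gt0] [s2 -> s2_gt0]; rewrite (minn_idPl le12).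
exists (s1 + e ^+ (2 * (n2 - n1)) * s2).
  by rewrite mulrDr mulrA -exprD -mulnDr subnKC.
rewrite hornerD hornerM horner_exp hornerXsubC subrr.
by rewrite ltr_wpDr // mulr_ge0 ?exprn_ge0 // ltW.
Qed.

Lemma germ_posZ c q n : 0 < c -> germ_pos q n -> germ_pos (c *: q) n.
Proof.
by move=> c_gt0 [s -> s_gt0]; exists (c *: s); rewrite ?scalerAr ?hornerZ ?mulr_gt0.
Qed.

Lemma germ_pos_sqr p : p != 0 -> germ_pos (p * p) (mup th p).
Proof.
move=> p0; have [m [r /implyP/(_ p0) rth ->]] := multiplicity_XsubC p th.
rewrite mupMr // mup_XsubCX eqxx.
exists (r * r); first by rewrite mul2n -addnn exprD; ring.
by rewrite hornerM -expr2 exprn_even_gt0 //= (negPf rth).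
Qed.

Lemma germ_nonnegD q1 q2 : germ_nonneg q1 -> germ_nonneg q2 -> germ_nonneg (q1 + q2).
Proof.
case=> [->|[n1 g1]]; first by rewrite add0r.
case=> [->|[n2 g2]]; first by rewrite addr0; right; exists n1.
by right; exists (minn n1 n2); apply: germ_posD.
Qed.

Lemma germ_nonnegZ c q : 0 <= c -> germ_nonneg q -> germ_nonneg (c *: q).
Proof.
rewrite le0r => /orP[/eqP->|c_gt0]; first by rewrite scale0r; left.
case=> [->|[n g]]; first by rewrite scaler0; left.
by right; exists n; apply: germ_posZ.
Qed.

Lemma germ_nonneg_sum (I : Type) (r : seq I) (P : pred I) (F : I -> {poly R}) :
  (forall i, P i -> germ_nonneg (F i)) -> germ_nonneg (\sum_(i <- r | P i) F i).
Proof. by move=> F_ge0; apply: big_ind => //; [left | exact: germ_nonnegD]. Qed.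

Lemma germ_pos_sqrD c p q : 0 < c -> p != 0 -> germ_nonneg q ->
  exists2 n, germ_pos (c *: (p * p) + q) n & (n <= mup th p)%N.
Proof.
move=> c_gt0 p0 [->|[n gq]]; have gp := germ_posZ c_gt0 (germ_pos_sqr p0).
  by rewrite addr0; exists (mup th p).
by exists (minn (mup th p) n); [apply: germ_posD | apply: geq_minl].
Qed.

End RootGerm.

Section Interlacing.
Variables (R : realFieldType) (T : finType) (adj : rel T).
Variables (p : {set T} -> {poly R}) (a : T -> R) (c : T -> T -> R) (th : R).
Hypothesis adj_irr : irreflexive adj.
Hypothesis c_gt0 : forall x y, adj x y -> 0 < c x y.
Hypothesis p_rec : forall (S : {set T}) u, u \in S -> p S =
  ('X - (a u)%:P) * p (S :\ u) - \sum_(z in S :\ u | adj u z) c u z *: p (S :\ u :\ z).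
Hypothesis p_neq0 : forall S, p S != 0.

Local Notation mu S := (mup th (p S)).

Definition wronskian (S : {set T}) u :=
  p (S :\ u) * (p S)^`() - (p (S :\ u))^`() * p S.

Definition darboux (S : {set T}) u v :=
  p (S :\ u) * p (S :\ v) - p S * p (S :\ u :\ v).

Lemma wronskian_rec (S : {set T}) u : u \in S -> wronskian S u =
  p (S :\ u) * p (S :\ u) + \sum_(z in S :\ u | adj u z) c u z *: wronskian (S :\ u) z.
Proof.
move=> uS; rewrite /wronskian (p_rec uS); set H := S :\ u.
rewrite derivB derivM derivXsubC mul1r raddf_sum /=.
under [X in _ = _ + X]eq_bigr => z _ do rewrite scalerBr !scalerAl.
rewrite sumrB -!mulr_suml.
under [\sum_(_ in _ | _) (_ *: _)^`()]eq_bigr => z _ do rewrite derivZ.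
move: (\sum_(z in H | adj u z) c u z *: p (H :\ z)) => Q.
move: (\sum_(z in H | adj u z) c u z *: (p (H :\ z))^`()) => Q'.
ring.
Qed.

Lemma darboux_rec (S : {set T}) u v : u \in S -> v \in S -> u != v -> darboux S u v =
  (if adj u v then c u v *: (p (S :\ u :\ v) * p (S :\ u :\ v)) else 0)
  + \sum_(z in S :\ u :\ v | adj u z) c u z *: darboux (S :\ u) z v.
Proof.
move=> uS vS uv; have vH : v \in S :\ u by rewrite in_setD1 eq_sym uv.
have uSv : u \in S :\ v by rewrite in_setD1 uv.
rewrite /darboux (p_rec uS) [p (S :\ v)](p_rec uSv) [S :\ v :\ u]setDDl setUC -setDDl.
set H := S :\ u.
under [X in _ = _ + X]eq_bigr => z _ do
  rewrite scalerBr scalerAl scalerAr [H :\ z :\ v]setDDl setUC -setDDl.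
rewrite sumrB -mulr_suml -mulr_sumr.
have -> : \sum_(z in H | adj u z) c u z *: p (H :\ z) =
    (if adj u v then c u v *: p (H :\ v) else 0) +
    \sum_(z in H :\ v | adj u z) c u z *: p (H :\ z).
  case: ifP => auv; last first.
    by rewrite add0r; apply: eq_bigl => z; rewrite in_setD1; case: eqP => // ->; rewrite auv andbF.
  rewrite (bigD1 v) /=; last by rewrite vH auv.
  by congr (_ + _); apply: eq_bigl => z; rewrite in_setD1 andbC andbA.
move: (\sum_(z in H :\ v | adj u z) c u z *: p (H :\ z)) => Q.
move: (\sum_(z in H :\ v | adj u z) c u z *: p (H :\ v :\ z)) => Q'.
case: ifP => _; rewrite ?add0r -?mul_polyC; ring.
Qed.

Lemma wronskian_nonneg (S : {set T}) u : u \in S -> germ_nonneg th (wronskian S u).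
Proof.
move: {2}#|S| (leqnn #|S|) => n; elim: n S u => [|n IH] S u.
  by rewrite leqn0 cards_eq0 => /eqP ->; rewrite inE.
move=> leSn uS; rewrite (wronskian_rec uS); apply: germ_nonnegD.
  by right; exists (mu (S :\ u)); apply: germ_pos_sqr.
apply: germ_nonneg_sum => z /andP [zH uz]; apply: germ_nonnegZ (ltW (c_gt0 uz)) _.
by apply: IH zH; move: leSn; rewrite (cardsD1 u S) uS.
Qed.

Lemma darboux_nonneg (S : {set T}) u v : u \in S -> v \in S -> u != v ->
  germ_nonneg th (darboux S u v).
Proof.
move: {2}#|S| (leqnn #|S|) => n; elim: n S u v => [|n IH] S u v.
  by rewrite leqn0 cards_eq0 => /eqP ->; rewrite inE.
move=> leSn uS vS uv; rewrite (darboux_rec uS vS uv); apply: germ_nonnegD.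
  case: ifP => uv_adj; last by left.
  apply: germ_nonnegZ (ltW (c_gt0 uv_adj)) _.
  by right; exists (mu (S :\ u :\ v)); apply: germ_pos_sqr.
apply: germ_nonneg_sum => z /andP [zHv uz]; apply: germ_nonnegZ (ltW (c_gt0 uz)) _.
move: zHv; rewrite in_setD1 => /andP [zv zH].
apply: IH => //; last by rewrite in_setD1 eq_sym uv.
by move: leSn; rewrite (cardsD1 u S) uS.
Qed.

Lemma wronskian_germ_pos (S : {set T}) u : u \in S ->
  exists2 n, germ_pos th (wronskian S u) n & (n <= mu (S :\ u))%N.
Proof.
move=> uS; rewrite (wronskian_rec uS) -[_ * _]scale1r; apply: germ_pos_sqrD => //.
apply: germ_nonneg_sum => z /andP [zH uz]; apply: germ_nonnegZ (ltW (c_gt0 uz)) _.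
exact: wronskian_nonneg.
Qed.

Lemma darboux_germ_pos (S : {set T}) u v : u \in S -> v \in S -> adj u v ->
  exists2 n, germ_pos th (darboux S u v) n & (n <= mu (S :\ u :\ v))%N.
Proof.
move=> uS vS uv_adj; have uv : u != v by apply: contraTneq uv_adj => ->; rewrite adj_irr.
rewrite (darboux_rec uS vS uv) uv_adj; apply: germ_pos_sqrD => //; first exact: c_gt0.
apply: germ_nonneg_sum => z /andP [zHv uz]; apply: germ_nonnegZ (ltW (c_gt0 uz)) _.
move: zHv; rewrite in_setD1 => /andP [zv zH].
by apply: darboux_nonneg => //; rewrite in_setD1 eq_sym uv.
Qed.

Lemma mup_setD1_leS (S : {set T}) u : u \in S -> (mu S <= (mu (S :\ u)).+1)%N.
Proof.
move=> uS; have [n Wn le_n] := wronskian_germ_pos uS.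
have := dvdp_wronskian_mup th (p (S :\ u)) (p S).
rewrite -mup_geq ?(germ_pos_neq0 Wn) // (germ_pos_mup Wn); lia.
Qed.

Lemma mup_setD1_geS (S : {set T}) u : u \in S -> (mu (S :\ u) <= (mu S).+1)%N.
Proof.
move=> uS; suff : ('X - th%:P) ^+ (mu (S :\ u)).-1 %| p S by rewrite -mup_geq //; lia.
rewrite (p_rec uS) dvdp_sub //; first by rewrite dvdp_mull ?dvdp_mup ?leq_pred.
apply: (big_ind (fun q => _ %| q)) => [|q1 q2|z /andP [zH _]]; [exact: dvdp0 | exact: dvdp_add |].
rewrite -mul_polyC dvdp_mull // dvdp_mup //.
by have := mup_setD1_leS zH; lia.
Qed.

Lemma special_positive (S : {set T}) u v : u \in S -> v \in S -> adj u v ->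
  (mu (S :\ v)).+1 = mu S -> (mu (S :\ u)).+1 != mu S ->
  mu (S :\ u) = (mu S).+1.
Proof.
move=> uS vS uv_adj v_ess u_ness.
have vSu : v \in S :\ u.
  by rewrite in_setD1 vS andbT; apply: contraTneq uv_adj => ->; rewrite adj_irr.
have := mup_setD1_leS uS; have := mup_setD1_geS uS; have := mup_setD1_leS vSu.
set m := mu S; set k := mu (S :\ u); set l := mu (S :\ u :\ v).
move=> le_k_lS le_k_mS le_m_kS; have [n Dn le_n_l] := darboux_germ_pos uS vS uv_adj.
apply/eqP; rewrite eqn_leq le_k_mS /=; apply/negP => le_k_m.
have k_eq_m : k = m by move/eqP: u_ness; lia.
have mup_uv : mup th (p (S :\ u) * p (S :\ v)) = (2 * m).-1.
  by rewrite mupM // -/k; lia.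
have mup_S_uv : mup th (p S * p (S :\ u :\ v)) = (m + l)%N by rewrite mupM.
have : ('X - th%:P) ^+ (2 * m).-1 %| darboux S u v.
  by rewrite dvdp_sub ?dvdp_mup ?mup_uv ?mup_S_uv //; lia.
rewrite -mup_geq ?(germ_pos_neq0 Dn) // (germ_pos_mup Dn) => le_m_n.
have : ('X - th%:P) ^+ (2 * m) %| p (S :\ u) * p (S :\ v).
  rewrite -[_ * _](subrK (p S * p (S :\ u :\ v))) dvdp_add ?dvdp_mup //.
    by rewrite (germ_pos_mup Dn); lia.
  by rewrite mup_S_uv; lia.
by rewrite -mup_geq ?mulf_neq0 // mup_uv; lia.
Qed.

End Interlacing.

Section Matchings.
Variables (T : finType) (adj : rel T).
Hypotheses (adj_sym : symmetric adj) (adj_irr : irreflexive adj).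

Lemma is_edge_inP (S e : {set T}) :
  reflect (exists x y, [/\ x \in S, y \in S, adj x y & e = [set x; y]])
          (is_edge_in adj S e).
Proof.
apply: (iffP existsP) => [[x /existsP [y /and4P [xS yS xy /eqP ->]]]|[x [y [xS yS xy ->]]]].
  by exists x, y.
by exists x; apply/existsP; exists y; rewrite xS yS xy eqxx.
Qed.

Lemma is_edge_in_sub (S e : {set T}) : is_edge_in adj S e -> e \subset S.
Proof.
by case/is_edge_inP=> x [y [xS yS _ ->]]; apply/subsetP => t; rewrite !inE => /orP[]/eqP->.
Qed.

Lemma is_edge_inS (S1 S2 e : {set T}) : S1 \subset S2 ->
  is_edge_in adj S1 e -> is_edge_in adj S2 e.
Proof.
move=> sS12 /is_edge_inP [x [y [xS yS xy ->]]]; apply/is_edge_inP; exists x, y.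
by split => //; apply: (subsetP sS12).
Qed.

Lemma card_is_edge_in (S e : {set T}) : is_edge_in adj S e -> #|e| = 2%N.
Proof.
case/is_edge_inP=> x [y [_ _ xy ->]]; rewrite cards2.
by case: eqP => // x_eq_y; move: xy; rewrite x_eq_y adj_irr.
Qed.

Lemma matching_inP (S : {set T}) (M : {set {set T}}) : reflect
  ((forall e, e \in M -> is_edge_in adj S e) /\
   (forall e f, e \in M -> f \in M -> e != f -> [disjoint e & f]))
  (matching_in adj S M).
Proof.
apply: (iffP andP) => [[/forall_inP edgeM /forall_inP disjM]|[edgeM disjM]].
  split=> // e f eM fM ef; have /forall_inP := disjM e eM.
  by move/(_ f fM); rewrite ef.
split; apply/forall_inP => // e eM; apply/forall_inP => f fM.
by apply/implyP; apply: disjM.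
Qed.

Lemma matching_in_card (S : {set T}) (M : {set {set T}}) :
  matching_in adj S M -> (2 * #|M| <= #|S|)%N.
Proof.
case/matching_inP=> edgeM disjM.
have trivM : trivIset M by apply/trivIsetP => A B AM BM AB; apply: disjM.
have M0 : set0 \notin M by apply/negP => /edgeM /card_is_edge_in; rewrite cards0.
have := @card_uniform_partition _ 2 M (cover M).
rewrite /partition eqxx trivM M0 => /(_ (fun X XM => card_is_edge_in (edgeM X XM)) isT).
rewrite mulnC => <-; apply: subset_leq_card.
by apply/bigcupsP => e eM; apply: is_edge_in_sub; apply: edgeM.
Qed.

Lemma matching_in_set0 (M : {set {set T}}) : matching_in adj set0 M = (M == set0).
Proof.
apply/idP/eqP => [/matching_in_card|->]; first by rewrite cards0 leqn0 muln_eq0 cards_eq0 => /eqP.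
by apply/matching_inP; split => e; rewrite inE.
Qed.

Lemma matching_in_setD1 (S : {set T}) u (M : {set {set T}}) : u \in S ->
  (matching_in adj S M && (u \notin cover M)) = matching_in adj (S :\ u) M.
Proof.
move=> uS; apply/idP/idP.
  case/andP => /matching_inP [edgeM disjM] uM; apply/matching_inP; split => // e eM.
  have ue : u \notin e by apply: contra uM => ue; apply/bigcupP; exists e.
  case/is_edge_inP: (edgeM e eM) => x [y [xS yS xy e_xy]].
  apply/is_edge_inP; exists x, y; split => //; rewrite in_setD1 ?xS ?yS andbT.
    by apply: contraNneq ue => <-; rewrite e_xy !inE eqxx.
  by apply: contraNneq ue => <-; rewrite e_xy !inE eqxx orbT.
case/matching_inP => edgeM disjM; apply/andP; split.
  by apply/matching_inP; split => // e eM; apply: is_edge_inS (edgeM e eM); apply: subsetDl.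
apply/bigcupP => [[e eM ue]].
by have := subsetP (is_edge_in_sub (edgeM e eM)) u ue; rewrite setD11.
Qed.

(* The vertex matched with u in M (junk value u if u is not covered by M). *)
Definition partner u (M : {set {set T}}) := odflt u [pick z | [set u; z] \in M].

Lemma partnerP (S : {set T}) u (M : {set {set T}}) :
  matching_in adj S M -> u \in cover M ->
  [/\ [set u; partner u M] \in M, partner u M \in S :\ u & adj u (partner u M)].
Proof.
case/matching_inP => edgeM _ /bigcupP [e eM ue].
have [z0 uz0M] : exists z0, [set u; z0] \in M.
  case/is_edge_inP: (edgeM e eM) => x [y [_ _ _ e_xy]].
  move: ue; rewrite e_xy !inE => /orP [] /eqP ux.
    by exists y; rewrite ux -e_xy.
  by exists x; rewrite ux setUC -e_xy.
rewrite /partner; case: pickP => [z uzM|]; last by move/(_ z0); rewrite uz0M.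
have uz_edge := edgeM _ uzM.
have uz_neq : u != z by have := card_is_edge_in uz_edge; rewrite cards2; case: eqP.
have zS : z \in S by apply: (subsetP (is_edge_in_sub uz_edge)); rewrite !inE eqxx orbT.
rewrite /= in_setD1 eq_sym uz_neq zS; split => //.
case/is_edge_inP: uz_edge => x [y [_ _ xy e_xy]].
have /andP [] : (u \in [set x; y]) && (z \in [set x; y]) by rewrite -e_xy !inE !eqxx orbT.
rewrite !inE => /orP[]/eqP ux /orP[]/eqP zx; subst; rewrite ?eqxx // in uz_neq.
by rewrite adj_sym.
Qed.

Section AddEdge.
Variables (S : {set T}) (u z : T).
Hypotheses (uS : u \in S) (zSu : z \in S :\ u) (uz_adj : adj u z).
Local Notation uz := [set u; z].

Lemma notin_matching_in_setD2 (M : {set {set T}}) e :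
  matching_in adj (S :\ u :\ z) M -> e \in M -> (u \notin e) && (z \notin e).
Proof.
case/matching_inP => edgeM _ eM; have sub := subsetP (is_edge_in_sub (edgeM e eM)).
by apply/andP; split; apply/negP => /sub; rewrite !in_setD1 ?eqxx ?andbF // andbC eqxx.
Qed.

Lemma edge_notin_matching_in_setD2 (M : {set {set T}}) :
  matching_in adj (S :\ u :\ z) M -> uz \notin M.
Proof.
by move=> matchM; apply/negP => /(notin_matching_in_setD2 matchM); rewrite !inE eqxx.
Qed.

Lemma matching_in_setU1 (M : {set {set T}}) :
  matching_in adj (S :\ u :\ z) M -> matching_in adj S (uz |: M).
Proof.
move=> matchM; have [edgeM disjM] := matching_inP _ _ matchM.
have uz_disj f : f \in M -> [disjoint uz & f].
  move=> fM; have /andP [uf zf] := notin_matching_in_setD2 matchM fM.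
  by rewrite disjoints_subset subUset !sub1set !inE uf zf.
apply/matching_inP; split.
  move=> e; rewrite in_setU1 => /orP [/eqP ->|eM].
    by apply/is_edge_inP; exists u, z; move: zSu; rewrite in_setD1 => /andP [_ zS].
  by apply: is_edge_inS (edgeM e eM); apply: subset_trans (subsetDl _ _) (subsetDl _ _).
move=> e f; rewrite !in_setU1 => /orP [/eqP ->|eM] /orP [/eqP ->|fM]; rewrite ?eqxx //.
- by move=> _; apply: uz_disj.
- by move=> _; rewrite disjoint_sym; apply: uz_disj.
- exact: disjM.
Qed.

Lemma partner_setU1 (M : {set {set T}}) :
  matching_in adj (S :\ u :\ z) M -> partner u (uz |: M) = z.
Proof.
move=> matchM; have uz_neq : u != z by apply: contraTneq uz_adj => ->; rewrite adj_irr.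
rewrite /partner; case: pickP => [y|]; last by move/(_ z); rewrite setU11.
rewrite in_setU1 => /orP [/eqP uy_uz|yM] /=; last first.
  by have := notin_matching_in_setD2 matchM yM; rewrite !inE eqxx.
have : y \in uz by rewrite -uy_uz !inE eqxx orbT.
rewrite !inE => /orP [/eqP yu|/eqP //]; move: uy_uz; rewrite yu setUid => uu_uz.
by apply/eqP; rewrite eq_sym -in_set1 uu_uz !inE eqxx orbT.
Qed.

Lemma matching_in_setU1_inv (M : {set {set T}}) :
  matching_in adj S (uz |: M) -> uz \notin M -> matching_in adj (S :\ u :\ z) M.
Proof.
case/matching_inP => edgeM disjM uzM; apply/matching_inP; split; last first.
  by move=> e f eM fM; apply: disjM; apply: setU1r.
move=> e eM; have eM' : e \in uz |: M by apply: setU1r.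
have uz_e : uz != e by apply: contraNneq uzM => ->.
have /pred0P uz_disj := disjM _ _ (setU11 _ _) eM' uz_e.
have notin_uz t : t \in e -> (t != z) && (t != u).
  by move=> te; have := uz_disj t; rewrite /= te andbT !inE => /norP [-> ->].
case/is_edge_inP: (edgeM e eM') => x [y [xS yS xy e_xy]].
apply/is_edge_inP; exists x, y; split => //; rewrite !in_setD1 ?xS ?yS !andbT.
  by rewrite notin_uz // e_xy !inE eqxx.
by rewrite notin_uz // e_xy !inE eqxx orbT.
Qed.

Lemma matching_in_setU1_partnerE (M : {set {set T}}) :
  (matching_in adj S (uz |: M) && (u \in cover (uz |: M)) && (partner u (uz |: M) == z)
   && ((uz |: M) :\ uz == M)) = matching_in adj (S :\ u :\ z) M.
Proof.
apply/idP/idP => [/andP [/andP [/andP [matchM _] _] /eqP M_eq]|matchM].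
  apply: matching_in_setU1_inv matchM _; apply/negP => uzM.
  by move: (setD11 uz (uz |: M)); rewrite M_eq uzM.
rewrite matching_in_setU1 // partner_setU1 // setU1K ?edge_notin_matching_in_setD2 //.
rewrite !eqxx !andbT /=; apply/bigcupP.
by exists uz; rewrite ?setU11 ?inE ?eqxx.
Qed.

End AddEdge.
End Matchings.

Section Recurrences.
Variables (R : rcfType) (T : finType) (adj : rel T).
Variables (w : {set T} -> R[i]) (w1 : T -> R).
Hypotheses (adj_sym : symmetric adj) (adj_irr : irreflexive adj).

Lemma mu_w_rec (S : {set T}) u : u \in S -> mu_w adj w S =
  'X * mu_w adj w (S :\ u) -
  \sum_(z in S :\ u | adj u z) `|w [set u; z]| ^+ 2 *: mu_w adj w (S :\ u :\ z).
Proof.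
move=> uS; rewrite /mu_w (bigID (fun M => u \in cover M)) /= addrC.
have cardS : #|S| = #|S :\ u|.+1 by rewrite (cardsD1 u S) uS.
congr (_ + _).
  rewrite mulr_sumr; apply: eq_big => M; first exact: matching_in_setD1.
  rewrite matching_in_setD1 // => matchM; have := matching_in_card adj_irr matchM.
  by rewrite -scalerAr -exprS cardS => le_M_S; rewrite subSn.
(* Group the matchings covering u by the partner of u, then remove that edge. *)
rewrite (partition_big (partner u) (fun z => (z \in S :\ u) && adj u z)); last first.
  by move=> M /andP [matchM uM]; have [_ -> ->] := partnerP adj_sym adj_irr matchM uM.
rewrite -sumrN; apply: eq_bigr => z /andP [zSu uz].
rewrite scaler_sumr -sumrN.
rewrite (reindex_onto (fun M => [set u; z] |: M) (fun M => M :\ [set u; z])) /=; last first.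
  move=> M /andP [/andP [matchM uM] /eqP <-].
  by have [uzM _ _] := partnerP adj_sym adj_irr matchM uM; rewrite setD1K.
apply: eq_big => M; first exact: matching_in_setU1_partnerE.
rewrite matching_in_setU1_partnerE // => matchM; have uzM := edge_notin_matching_in_setD2 matchM.
rewrite cardsU1 uzM /wM big_setU1 //= normrM exprMn scalerA -scaleNr.
congr (_ *: 'X^_); first by rewrite add1n (exprS (-1)) mulN1r mulNr mulrCA.
have cardSuz : #|S| = #|S :\ u :\ z|.+2.
  by move: zSu; rewrite in_setD1 => /andP [zu zS]; rewrite cardS (cardsD1 z (S :\ u)) in_setD1 zu zS.
by rewrite cardSuz; lia.
Qed.

Definition eta_coef (A B : {set T}) : R[i] :=
  (-1) ^+ #|A :\: B| * \prod_(y in A :\: B) (w1 y)%:C.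

Lemma eta_coef_setD1 (A B : {set T}) a : a \in A -> B \subset A :\ a ->
  eta_coef A B = - (w1 a)%:C * eta_coef (A :\ a) B.
Proof.
move=> aA sB; have aB : a \notin B by apply/negP => /(subsetP sB); rewrite setD11.
have AB : A :\: B = a |: ((A :\ a) :\: B).
  by apply/setP => t; rewrite !inE; case: eqP => [->|] //=; rewrite aA (negPf aB).
have aAB : a \notin (A :\ a) :\: B by rewrite !inE eqxx andbF.
rewrite /eta_coef AB cardsU1 aAB big_setU1 //= exprS; ring.
Qed.

Lemma eta_coef_setU1 (A B : {set T}) a : eta_coef A (a |: B) = eta_coef (A :\ a) B.
Proof. by rewrite /eta_coef setDDl. Qed.

Lemma big_subset_mem (A : {set T}) a (G : {set T} -> {poly R[i]}) : a \in A ->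
  \sum_(B : {set T} | (B \subset A) && (a \in B)) G B =
  \sum_(B : {set T} | B \subset A :\ a) G (a |: B).
Proof.
move=> aA; rewrite (reindex_onto (fun B => a |: B) (fun B => B :\ a)) /=; last first.
  by move=> B /andP [_ aB]; rewrite setD1K.
apply: eq_bigl => B; rewrite setU11 andbT subsetD1.
apply/idP/idP => [/andP [sBA /eqP <-]|/andP [sBA aB]].
  by rewrite setD11 andbT (subset_trans (subsetDl _ _) sBA).
by rewrite setU1K // eqxx subUset sub1set aA sBA.
Qed.

Lemma big_subset_setD1 (A : {set T}) a (G : {set T} -> {poly R[i]}) : a \in A ->
  \sum_(B : {set T} | B \subset A) G B =
  \sum_(B : {set T} | B \subset A :\ a) G B + \sum_(B : {set T} | B \subset A :\ a) G (a |: B).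
Proof.
move=> aA; rewrite (bigID (fun B : {set T} => a \in B)) /= addrC big_subset_mem //.
by congr (_ + _); apply: eq_bigl => B; rewrite subsetD1.
Qed.

Lemma eta_w_rec (S : {set T}) u : u \in S -> eta_w adj w w1 S =
  ('X - ((w1 u)%:C)%:P) * eta_w adj w w1 (S :\ u) -
  \sum_(z in S :\ u | adj u z) `|w [set u; z]| ^+ 2 *: eta_w adj w w1 (S :\ u :\ z).
Proof.
move=> uS; set H := S :\ u.
rewrite [eta_w _ _ _ S](big_subset_setD1 _ uS) -/H mulrBl addrAC addrC -mulNr; congr (_ + _).
  rewrite mulr_sumr; apply: eq_bigr => B sB.
  by rewrite -/(eta_coef _ _) (eta_coef_setD1 uS sB) -scalerA mulNr mul_polyC scaleNr.
have mu_w_setU1 (B : {set T}) : B \subset H -> mu_w adj w (u |: B) = 'X * mu_w adj w B -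
    \sum_(z in B | adj u z) `|w [set u; z]| ^+ 2 *: mu_w adj w (B :\ z).
  by rewrite subsetD1 => /andP [_ uB]; rewrite (mu_w_rec (setU11 u B)) setU1K.
under eq_bigr => B sB do
  rewrite -/(eta_coef _ _) eta_coef_setU1 (mu_w_setU1 _ sB) scalerBr scalerAr.
rewrite sumrB mulr_sumr; congr (_ - _).
under eq_bigr => B _ do rewrite scaler_sumr.
rewrite (exchange_big_dep (fun z => (z \in H) && adj u z)) /=; last first.
  by move=> B z sB /andP [zB ->]; rewrite (subsetP sB z zB).
apply: eq_bigr => z /andP [zH uz]; rewrite scaler_sumr.
rewrite (eq_bigl (fun B : {set T} => (B \subset H) && (z \in B))); last first.
  by move=> B; rewrite uz andbT.
rewrite big_subset_mem //; apply: eq_bigr => B sB.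
move: sB; rewrite subsetD1 => /andP [_ zB].
by rewrite -/(eta_coef _ _) eta_coef_setU1 setU1K // !scalerA mulrC.
Qed.

End Recurrences.

Section RealForm.
Variables (R : rcfType) (T : finType) (adj : rel T).
Variables (w : {set T} -> R[i]) (w1 : T -> R).
Hypotheses (adj_sym : symmetric adj) (adj_irr : irreflexive adj).

Local Notation eta := (eta_w adj w w1).

Lemma eta_w_set0 : eta set0 = 1.
Proof.
rewrite /eta_w (eq_bigl (pred1 set0)) => [|B]; last by rewrite subset0.
rewrite big_pred1_eq /mu_w (eq_bigl (pred1 set0)) => [|M]; last exact: matching_in_set0.
by rewrite big_pred1_eq setDv !cards0 /wM !big_set0 normr1 expr1n !mulr1 !scale1r.
Qed.

Definition edge_coef x y : R := complex.Re (`|w [set x; y]| ^+ 2).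

Lemma edge_coefE x y : `|w [set x; y]| ^+ 2 = (edge_coef x y)%:C.
Proof.
have := ger0_Im (exprn_ge0 2 (normr_ge0 (w [set x; y]))).
by rewrite /edge_coef; case: (`|_| ^+ 2) => a b /= ->.
Qed.

Lemma edge_coef_gt0 : edge_weight_ok adj w -> forall x y, adj x y -> 0 < edge_coef x y.
Proof.
move=> w_neq0 x y xy; have : 0 < `|w [set x; y]| ^+ 2 by rewrite exprn_gt0 ?normr_gt0 ?w_neq0.
by rewrite edge_coefE ltcR.
Qed.

Lemma Re_map_polyK (q : {poly R}) : map_poly (@complex.Re R) (map_poly (real_complex R) q) = q.
Proof. by apply/polyP => i; rewrite coef_map_id0 // coef_map. Qed.

(* The interlacing argument needs an ordered field, hence the real parts; [eta_w_real]
   shows that nothing is lost. *)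
Definition eta_re (S : {set T}) : {poly R} := map_poly (@complex.Re R) (eta S).

Definition eta_re_step (S : {set T}) u : {poly R} :=
  ('X - (w1 u)%:P) * eta_re (S :\ u) -
  \sum_(z in S :\ u | adj u z) edge_coef u z *: eta_re (S :\ u :\ z).

Lemma eta_w_step (S : {set T}) u : u \in S ->
  eta (S :\ u) = map_poly (real_complex R) (eta_re (S :\ u)) ->
  {in S :\ u, forall z, eta (S :\ u :\ z) = map_poly (real_complex R) (eta_re (S :\ u :\ z))} ->
  eta S = map_poly (real_complex R) (eta_re_step S u).
Proof.
move=> uS realSu realSuz.
rewrite (eta_w_rec w w1 adj_sym adj_irr uS) rmorphB rmorphM /= map_polyXsubC rmorph_sum /=.
rewrite -realSu; congr (_ - _); apply: eq_bigr => z /andP [zSu _].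
by rewrite map_polyZ /= -realSuz // edge_coefE.
Qed.

Lemma eta_w_real (S : {set T}) : eta S = map_poly (real_complex R) (eta_re S).
Proof.
have Re_map1 : map_poly (@complex.Re R) 1 = 1.
  by apply/polyP => i; rewrite coef_map_id0 // !coef1; case: (i == 0%N).
move: {2}#|S| (leqnn #|S|) => n; elim: n S => [|n IH] S leSn;
  have [->|/set0Pn [u uS]] := eqVneq S set0;
  rewrite /eta_re ?eta_w_set0 ?Re_map1 ?rmorph1 //.
  by move: leSn; rewrite (cardsD1 u) uS.
have leSun : (#|S :\ u| <= n)%N by move: leSn; rewrite (cardsD1 u S) uS.
rewrite (eta_w_step uS) ?Re_map_polyK //; first exact: IH.
move=> z zSu; apply: IH; apply: leq_trans leSun.
by rewrite (cardsD1 z (S :\ u)) zSu.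
Qed.

Lemma eta_re_rec (S : {set T}) u : u \in S -> eta_re S = eta_re_step S u.
Proof.
move=> uS; rewrite {1}/eta_re (eta_w_step uS) ?Re_map_polyK //.
  exact: eta_w_real.
by move=> z _; apply: eta_w_real.
Qed.

Lemma size_eta_re (S : {set T}) : size (eta_re S) = #|S|.+1.
Proof.
move: {2}#|S| (leqnn #|S|) => n; elim: n S => [|n IH] S leSn;
  have [->|/set0Pn [u uS]] := eqVneq S set0;
  rewrite ?cards0 /eta_re ?eta_w_set0 ?(map_polyC, size_polyC, oner_eq0) //.
  by move: leSn; rewrite (cardsD1 u) uS.
have leSun : (#|S :\ u| <= n)%N by move: leSn; rewrite (cardsD1 u S) uS.
have sizeSu := IH _ leSun; rewrite -/(eta_re S) (eta_re_rec uS) (cardsD1 u S) uS.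
rewrite size_polyDl size_mul ?polyXsubC_eq0 ?size_XsubC ?sizeSu // -?size_poly_gt0 ?sizeSu //.
rewrite size_polyN ltnS; apply: (leq_trans (size_sum _ _ _)).
apply/bigmax_leqP => z /andP [zSu _]; apply: leq_trans (size_scale_leq _ _) _.
have ltSuz : (#|S :\ u :\ z| < #|S :\ u|)%N by rewrite (cardsD1 z (S :\ u)) zSu.
by rewrite IH ?(leq_trans (ltnW ltSuz)) // ltnW.
Qed.

Lemma eta_re_neq0 (S : {set T}) : eta_re S != 0.
Proof. by rewrite -size_poly_gt0 size_eta_re. Qed.

Lemma mult_eta_re th (S : {set T}) : mult adj w w1 th S = mup th (eta_re S).
Proof. by rewrite /mult eta_w_real mup_map_poly ?eta_re_neq0. Qed.

End RealForm.

Theorem lemma5p1 (R : rcfType) (T : finType) (adj : rel T)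
  (w : {set T} -> R[i]) (w1 : T -> R) (theta : R) (u : T) :
  simple_graph adj -> edge_weight_ok adj w ->
  special adj w w1 theta [set: T] u ->
  positive adj w w1 theta [set: T] u.
Proof.
move=> [adj_sym adj_irr] w_neq0 [uT [u_ness [v [vT uv] [_ v_ess]]]].
split=> //; move: v_ess u_ness; rewrite /essential !(mult_eta_re w w1 adj_sym adj_irr).
move=> v_ess u_ness; apply: (special_positive adj_irr (edge_coef_gt0 w_neq0)
  (eta_re_rec w w1 adj_sym adj_irr) (eta_re_neq0 w w1 adj_sym adj_irr) uT vT uv v_ess).
by apply/eqP => u_ess; apply: u_ness.
Qed.
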